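(* Let $a\in\mathbb{C}$ and let $\mathcal{DC}_a=\{(z,\,az+\tfrac{1}{z})\in\mathbb{C}^2 : z\in\mathbb{C}\setminus\{0\}\}\subset\mathbb{C}^2\cong\mathbb{R}^4$. Then the only smooth simple closed curves on $\mathcal{DC}_a$ that lie in a $2$-dimensional affine plane of $\mathbb{R}^4$ are the images of the circles $\{z=re^{i\theta}: 0\le\theta\le 2\pi\}$, $r>0$, under the map $z\mapsto (z,az+1/z)$.
   Context: $\mathbb{C}^2$ is identified with $\mathbb{R}^4$ via $(z,w)\leftrightarrow(\mathrm{Re}\,z,\mathrm{Im}\,z,\mathrm{Re}\,w,\mathrm{Im}\,w)$. *)

From Stdlib Require Import Reals.
From Coquelicot Require Import Coquelicot.
Open Scope R_scope.

(* R^4, identified with C^2 via (z,w) <-> (Re z, Im z, Re w, Im w). *)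
Definition R4 : Type := (R * R * R * R)%type.

Definition pt4 (x1 x2 x3 x4 : R) : R4 := (x1, x2, x3, x4).

Definition DCmap (a z : C) : R4 :=
  let w := (a * z + / z)%C in pt4 (fst z) (snd z) (fst w) (snd w).

Definition on_DC (a : C) (p : R4) : Prop :=
  exists z : C, z <> 0%C /\ p = DCmap a z.

Definition aff (p u v : R4) (s t : R) : R4 :=
  match p, u, v with
  | (p1, p2, p3, p4), (u1, u2, u3, u4), (v1, v2, v3, v4) =>
      pt4 (p1 + s * u1 + t * v1) (p2 + s * u2 + t * v2)
          (p3 + s * u3 + t * v3) (p4 + s * u4 + t * v4)
  end.

Definition lin_indep (u v : R4) : Prop :=
  forall s t : R, aff (pt4 0 0 0 0) u v s t = pt4 0 0 0 0 -> s = 0 /\ t = 0.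

Definition in_affine_2plane (S : R4 -> Prop) : Prop :=
  exists p u v : R4, lin_indep u v /\
    forall q, S q -> exists s t : R, q = aff p u v s t.

Definition smooth (f : R -> R) : Prop := forall (n : nat) (x : R), ex_derive_n f n x.

Definition smooth_simple_closed_curve (S : R4 -> Prop) : Prop :=
  exists (g1 g2 g3 g4 : R -> R) (T : R),
    0 < T /\
    smooth g1 /\ smooth g2 /\ smooth g3 /\ smooth g4 /\
    (forall t, g1 (t + T) = g1 t /\ g2 (t + T) = g2 t /\
               g3 (t + T) = g3 t /\ g4 (t + T) = g4 t) /\
    (forall t, Derive g1 t <> 0 \/ Derive g2 t <> 0 \/
               Derive g3 t <> 0 \/ Derive g4 t <> 0) /\
    (forall s t, 0 <= s < T -> 0 <= t < T ->
       pt4 (g1 s) (g2 s) (g3 s) (g4 s) = pt4 (g1 t) (g2 t) (g3 t) (g4 t) -> s = t) /\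
    (forall q, S q <-> exists t, q = pt4 (g1 t) (g2 t) (g3 t) (g4 t)).

Definition circle_image (a : C) (r : R) (q : R4) : Prop :=
  exists theta : R, 0 <= theta <= 2 * PI /\
    q = DCmap a (r * cos theta, r * sin theta)%R.

From Stdlib Require Import Reals Lra Lia ZArith Classical.
From Coquelicot Require Import Coquelicot.
Open Scope R_scope.

(* On DC_a write w = a z + 1/z = a z + k conj(z) with k = 1/|z|^2.  For a fixed
   level k, the points of a 2-plane lying on DC_a solve a 2x2 linear system in the
   plane coordinates, whose determinant is quadratic in k with leading coefficient
   minus the determinant of the projection of the plane to the z-line.  That
   projection is onto, since otherwise z would run injectively along a line over
   a period.  If |z| were not constant along the curve, every level between two
   values of k would be reached twice in one period, so the determinant would
   vanish on an interval, which is impossible.  Hence z runs injectively on a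
   circle |z| = r, and then covers it: a missed point would make stereographic
   projection from it an injective continuous periodic real function.  Conversely
   the image of a circle is an explicit trigonometric curve in a 2-plane. *)

Lemma continuity_cst (c : R) : continuity (fun _ => c).
Proof. apply continuity_const; intros ? ?; reflexivity. Qed.

Ltac continuity_auto :=
  repeat first
    [ assumption | apply continuity_cst | apply derivable_continuous, derivable_id
    | apply continuity_plus | apply continuity_minus | apply continuity_mult
    | apply continuity_opp ].

Lemma smooth_continuity (f : R -> R) : smooth f -> continuity f.
Proof.
  intros Hf x. apply continuity_pt_filterlim, (ex_derive_continuous f).
  exact (Hf 1%nat x).
Qed.

Lemma periodic_shift_Z (X : Type) (f : R -> X) (T : R) :
  (forall t, f (t + T) = f t) -> forall (n : Z) t, f (t + IZR n * T) = f t.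
Proof.
  intros Hp.
  assert (Hnat : forall (n : nat) t, f (t + INR n * T) = f t).
  { induction n as [|n IH]; intro t.
    - simpl; f_equal; ring.
    - rewrite S_INR, <- (IH t), <- (Hp (t + INR n * T)). f_equal; ring. }
  intros [|p|p] t.
  - simpl; f_equal; ring.
  - rewrite <- positive_nat_Z, <- INR_IZR_INZ. apply Hnat.
  - rewrite <- (Hnat (Pos.to_nat p) (t + IZR (Z.neg p) * T)).
    rewrite INR_IZR_INZ, positive_nat_Z, <- Pos2Z.opp_pos, opp_IZR. f_equal; ring.
Qed.

Lemma periodic_reduce (X : Type) (f : R -> X) (T : R) : 0 < T ->
  (forall t, f (t + T) = f t) -> forall t, exists t', 0 <= t' < T /\ f t = f t'.
Proof.
  intros HT Hp t.
  destruct (base_Int_part (t / T)) as [Hlo Hhi].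
  set (n := Int_part (t / T)) in *.
  exists (t - IZR n * T). split.
  - assert (IZR n * T <= t / T * T) by (apply Rmult_le_compat_r; lra).
    assert ((t / T - 1) * T < IZR n * T) by (apply Rmult_lt_compat_r; lra).
    replace (t / T * T) with t in * by (field; lra).
    replace ((t / T - 1) * T) with (t - T) in * by (field; lra). lra.
  - rewrite <- (periodic_shift_Z X f T Hp n (t - IZR n * T)). f_equal; ring.
Qed.

Lemma IVT_strict (f : R -> R) (a b v : R) : continuity f -> a < b ->
  (f a < v < f b \/ f b < v < f a) -> exists s, a < s < b /\ f s = v.
Proof.
  intros Hf Hab Hv.
  destruct (IVT_gen f a b v Hf) as [s [Hs Hfs]].
  - unfold Rmin, Rmax; destruct (Rle_dec (f a) (f b)); lra.
  - rewrite Rmin_left, Rmax_right in Hs by lra.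
    exists s; split; [|exact Hfs].
    destruct (Req_dec s a) as [->|]; [lra|].
    destruct (Req_dec s b) as [->|]; lra.
Qed.

Lemma periodic_value_twice (f : R -> R) (T t1 v : R) : continuity f ->
  0 < t1 < T -> f T = f 0 -> (f 0 < v < f t1 \/ f t1 < v < f 0) ->
  exists s1 s2, 0 < s1 < t1 /\ t1 < s2 < T /\ f s1 = v /\ f s2 = v.
Proof.
  intros Hf Ht1 HT Hv.
  destruct (IVT_strict f 0 t1 v) as [s1 [Hs1 E1]]; [easy|lra|lra|].
  destruct (IVT_strict f t1 T v) as [s2 [Hs2 E2]]; [easy|lra|rewrite HT; lra|].
  exists s1, s2; repeat split; lra.
Qed.

Lemma periodic_not_injective (f : R -> R) (T : R) : continuity f -> 0 < T -> f T = f 0 ->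
  ~ (forall s t, 0 <= s < T -> 0 <= t < T -> f s = f t -> s = t).
Proof.
  intros Hf HT Hper Hinj.
  assert (Hmid : f (T / 2) <> f 0) by (intro E; apply Hinj in E; lra).
  destruct (periodic_value_twice f T (T / 2) ((f 0 + f (T / 2)) / 2))
    as [s1 [s2 [Hs1 [Hs2 [E1 E2]]]]]; [easy|lra|easy|
      destruct (Rlt_dec (f 0) (f (T / 2))); [left|right]; lra|].
  assert (s1 = s2) by (apply Hinj; lra). lra.
Qed.

Lemma det2_kernel_trivial (X1 Y1 X2 Y2 s t : R) : X1 * Y2 - X2 * Y1 <> 0 ->
  s * X1 + t * Y1 = 0 -> s * X2 + t * Y2 = 0 -> s = 0 /\ t = 0.
Proof.
  intros Hdet E1 E2.
  assert (Es : s * (X1 * Y2 - X2 * Y1) = 0).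
  { replace (s * (X1 * Y2 - X2 * Y1)) with (Y2 * (s * X1 + t * Y1) - Y1 * (s * X2 + t * Y2))
      by ring. rewrite E1, E2; ring. }
  assert (Et : t * (X1 * Y2 - X2 * Y1) = 0).
  { replace (t * (X1 * Y2 - X2 * Y1)) with (X1 * (s * X2 + t * Y2) - X2 * (s * X1 + t * Y1))
      by ring. rewrite E1, E2; ring. }
  apply Rmult_integral in Es, Et. tauto.
Qed.

Lemma dependent_span_separating_functional (u1 u2 v1 v2 : R) : u1 * v2 - u2 * v1 = 0 ->
  exists e1 e2, forall s t, e1 * (s * u1 + t * v1) + e2 * (s * u2 + t * v2) = 0 ->
    s * u1 + t * v1 = 0 /\ s * u2 + t * v2 = 0.
Proof.
  intros Hdep.
  destruct (Req_dec (u1 * u1 + u2 * u2) 0) as [Hu|Hu].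
  - assert (u1 = 0) by nra. assert (u2 = 0) by nra. subst.
    exists v1, v2. intros s t E.
    destruct (Req_dec (v1 * v1 + v2 * v2) 0) as [Hv|Hv].
    + assert (v1 = 0) by nra. assert (v2 = 0) by nra. subst. split; ring.
    + assert (t * (v1 * v1 + v2 * v2) = 0) by nra.
      apply Rmult_integral in H as [->|]; [split; ring|contradiction].
  - exists u1, u2. intros s t E.
    split; apply (Rmult_eq_reg_r (u1 * u1 + u2 * u2)); auto.
    + replace ((s * u1 + t * v1) * (u1 * u1 + u2 * u2)) with
        (u1 * (u1 * (s * u1 + t * v1) + u2 * (s * u2 + t * v2)) - t * u2 * (u1 * v2 - u2 * v1))
        by ring. rewrite E, Hdep; ring.
    + replace ((s * u2 + t * v2) * (u1 * u1 + u2 * u2)) with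
        (u2 * (u1 * (s * u1 + t * v1) + u2 * (s * u2 + t * v2)) + t * u1 * (u1 * v2 - u2 * v1))
        by ring. rewrite E, Hdep; ring.
Qed.

Lemma quadratic_three_roots (A B C k1 k2 k3 : R) : k1 <> k2 -> k2 <> k3 -> k1 <> k3 ->
  A * k1 ^ 2 + B * k1 + C = 0 -> A * k2 ^ 2 + B * k2 + C = 0 -> A * k3 ^ 2 + B * k3 + C = 0 ->
  A = 0.
Proof.
  intros D12 D23 D13 E1 E2 E3.
  assert (E : A * ((k1 - k2) * ((k2 - k3) * (k1 - k3))) = 0).
  { replace (A * ((k1 - k2) * ((k2 - k3) * (k1 - k3)))) with
      ((A * k1 ^ 2 + B * k1 + C) * (k2 - k3) - (A * k2 ^ 2 + B * k2 + C) * (k1 - k3)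
       + (A * k3 ^ 2 + B * k3 + C) * (k1 - k2)) by ring.
    rewrite E1, E2, E3; ring. }
  apply Rmult_integral in E as [|E]; [easy|].
  repeat (apply Rmult_integral in E as [E|E]); lra.
Qed.

Lemma stereographic_injective (r X1 Y1 X2 Y2 : R) :
  X1 ^ 2 + Y1 ^ 2 = r ^ 2 -> X2 ^ 2 + Y2 ^ 2 = r ^ 2 -> X1 <> r -> X2 <> r ->
  Y1 / (r - X1) = Y2 / (r - X2) -> X1 = X2 /\ Y1 = Y2.
Proof.
  intros C1 C2 N1 N2 E.
  set (m := Y1 / (r - X1)) in *.
  assert (R1 : Y1 = m * (r - X1)) by (unfold m; field; lra).
  assert (R2 : Y2 = m * (r - X2)) by (rewrite E; field; lra).
  assert (S1 : r + X1 = m ^ 2 * (r - X1)).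
  { apply (Rmult_eq_reg_l (r - X1)); [|lra].
    replace ((r - X1) * (r + X1)) with (r ^ 2 - X1 ^ 2) by ring. rewrite <- C1, R1. ring. }
  assert (S2 : r + X2 = m ^ 2 * (r - X2)).
  { apply (Rmult_eq_reg_l (r - X2)); [|lra].
    replace ((r - X2) * (r + X2)) with (r ^ 2 - X2 ^ 2) by ring. rewrite <- C2, R2. ring. }
  assert (EX : X1 = X2) by (apply (Rmult_eq_reg_l (1 + m ^ 2)); nra).
  split; [exact EX|]. rewrite R1, R2, EX; ring.
Qed.

Lemma periodic_injective_circle_surjective (x y : R -> R) (T r : R) :
  0 < T -> 0 < r -> continuity x -> continuity y ->
  (forall t, x (t + T) = x t /\ y (t + T) = y t) ->
  (forall s t, 0 <= s < T -> 0 <= t < T -> x s = x t -> y s = y t -> s = t) ->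
  (forall t, x t ^ 2 + y t ^ 2 = r ^ 2) ->
  forall c s, c ^ 2 + s ^ 2 = 1 -> exists t, x t = r * c /\ y t = r * s.
Proof.
  intros HT Hr Hx Hy Hper Hinj Hcirc c s Hcs.
  apply NNPP; intro Hmiss.
  (* coordinates rotated so that the missed point becomes (r, 0) *)
  set (X t := x t * c + y t * s).
  set (Y t := - x t * s + y t * c).
  assert (HXY : forall t, X t ^ 2 + Y t ^ 2 = r ^ 2).
  { intro t. rewrite <- (Hcirc t), <- (Rmult_1_r (x t ^ 2 + y t ^ 2)), <- Hcs.
    unfold X, Y; ring. }
  assert (Hx_rot : forall t, x t = X t * c - Y t * s).
  { intro t. unfold X, Y. rewrite <- (Rmult_1_r (x t)) at 1. rewrite <- Hcs. ring. }
  assert (Hy_rot : forall t, y t = X t * s + Y t * c).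
  { intro t. unfold X, Y. rewrite <- (Rmult_1_r (y t)) at 1. rewrite <- Hcs. ring. }
  assert (HX : forall t, X t <> r).
  { intros t E. apply Hmiss. exists t.
    assert (HY : Y t = 0) by (specialize (HXY t); rewrite E in HXY; nra).
    rewrite Hx_rot, Hy_rot, E, HY. split; ring. }
  apply (periodic_not_injective (fun t => Y t / (r - X t)) T).
  - apply continuity_div; unfold X, Y; [continuity_auto..|].
    intro t. specialize (HX t). unfold X in HX. lra.
  - exact HT.
  - destruct (Hper 0) as [P1 P2]. rewrite Rplus_0_l in P1, P2.
    unfold X, Y; rewrite P1, P2; reflexivity.
  - intros t1 t2 H1 H2 E.
    destruct (stereographic_injective r (X t1) (Y t1) (X t2) (Y t2)) as [EX EY]; auto.
    apply Hinj; auto; [rewrite Hx_rot, (Hx_rot t2)|rewrite Hy_rot, (Hy_rot t2)];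
      rewrite EX, EY; reflexivity.
Qed.

Lemma cos_sin_injective (s t : R) : 0 <= s < 2 * PI -> 0 <= t < 2 * PI ->
  cos s = cos t -> sin s = sin t -> s = t.
Proof.
  intros Hs Ht Hc Hsn.
  assert (S0 : sin (s - t) = 0) by (rewrite sin_minus, Hc, Hsn; ring).
  assert (C1 : cos (s - t) = 1) by (rewrite cos_minus, Hc, Hsn, Rplus_comm; apply sin2_cos2).
  destruct (sin_eq_0_0 _ S0) as [k Hk].
  pose proof PI_RGT_0.
  assert (Hk2 : IZR k < 2) by (apply (Rmult_lt_reg_r PI); lra).
  assert (Hk2' : -2 < IZR k) by (apply (Rmult_lt_reg_r PI); lra).
  apply lt_IZR in Hk2, Hk2'.
  assert (Hk3 : k = (-1)%Z \/ k = 0%Z \/ k = 1%Z) by lia.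
  destruct Hk3 as [-> | [-> | ->]].
  - rewrite Hk in C1. replace (IZR (-1) * PI) with (- PI) in C1 by (simpl; ring).
    rewrite cos_neg, cos_PI in C1. lra.
  - simpl in Hk. lra.
  - rewrite Hk, Rmult_1_l, cos_PI in C1. lra.
Qed.

Lemma cos2_sin2 (t : R) : cos t ^ 2 + sin t ^ 2 = 1.
Proof. rewrite <- (sin2_cos2 t). unfold Rsqr. ring. Qed.

Lemma polar_coordinates (x y r : R) : 0 < r -> x ^ 2 + y ^ 2 = r ^ 2 ->
  exists theta, 0 <= theta <= 2 * PI /\ x = r * cos theta /\ y = r * sin theta.
Proof.
  intros Hr Hxy.
  set (c := x / r).
  assert (Hc2 : c ^ 2 + (y / r) ^ 2 = 1).
  { unfold c. field_simplify; [rewrite Hxy; field|]; lra. }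
  assert (Hc : -1 <= c <= 1) by nra.
  assert (Hsin : sqrt (1 - c²) = Rabs (y / r)).
  { rewrite <- sqrt_Rsqr_abs. f_equal. unfold Rsqr. simpl in Hc2. lra. }
  pose proof (acos_bound c). pose proof PI_RGT_0.
  assert (Hx : x = r * c) by (unfold c; field; lra).
  destruct (Rle_dec 0 y) as [Hy|Hy].
  - exists (acos c). split; [lra|].
    rewrite cos_acos, sin_acos, Hsin, Rabs_pos_eq by (try apply Rdiv_le_0_compat; lra).
    split; [exact Hx|field; lra].
  - exists (2 * PI - acos c). split; [lra|].
    rewrite cos_minus, sin_minus, cos_2PI, sin_2PI, cos_acos, sin_acos, Hsin by lra.
    rewrite Rabs_left by (apply Rdiv_neg_pos; lra).
    split; [rewrite Hx; ring|field; lra].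
Qed.

Definition trig_comb (A B t : R) : R := A * cos t + B * sin t.

Lemma is_derive_trig_comb (A B t : R) : is_derive (trig_comb A B) t (trig_comb B (- A) t).
Proof. unfold trig_comb. auto_derive; [easy|ring]. Qed.

Lemma Derive_n_trig_comb (n : nat) : forall A B, exists A' B',
  forall t, Derive_n (trig_comb A B) n t = trig_comb A' B' t.
Proof.
  induction n as [|n IH]; intros A B.
  - exists A, B; reflexivity.
  - destruct (IH A B) as [A' [B' HD]]. exists B', (- A'). intro t. simpl.
    rewrite (Derive_ext _ _ _ HD). apply is_derive_unique, is_derive_trig_comb.
Qed.

Lemma smooth_trig_comb (A B : R) : smooth (trig_comb A B).
Proof.
  intros [|n] t; [exact I|]. simpl.
  destruct (Derive_n_trig_comb n A B) as [A' [B' HD]].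
  apply (ex_derive_ext (trig_comb A' B')); [intro; symmetry; apply HD|].
  eexists; apply is_derive_trig_comb.
Qed.

Lemma trig_comb_periodic (A B t : R) : trig_comb A B (t + 2 * PI) = trig_comb A B t.
Proof. unfold trig_comb. rewrite cos_plus, sin_plus, cos_2PI, sin_2PI. ring. Qed.

Lemma DCmap_coords (a1 a2 x y : R) : DCmap (a1, a2) (x, y) =
  pt4 x y (a1 * x - a2 * y + x * / (x ^ 2 + y ^ 2)) (a1 * y + a2 * x - y * / (x ^ 2 + y ^ 2)).
Proof.
  unfold DCmap, pt4, Cplus, Cmult, Cinv; simpl. unfold Rdiv.
  f_equal; ring.
Qed.

Lemma on_DC_coords (a1 a2 x1 x2 x3 x4 : R) : on_DC (a1, a2) (pt4 x1 x2 x3 x4) ->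
  x1 ^ 2 + x2 ^ 2 <> 0 /\ x3 = a1 * x1 - a2 * x2 + x1 * / (x1 ^ 2 + x2 ^ 2) /\
  x4 = a1 * x2 + a2 * x1 - x2 * / (x1 ^ 2 + x2 ^ 2).
Proof.
  intros [[z1 z2] [Hz E]]. rewrite DCmap_coords in E. unfold pt4 in E.
  injection E as -> -> -> ->. split; [|auto].
  intro H0. apply Hz. assert (z1 = 0) by nra. assert (z2 = 0) by nra. subst; reflexivity.
Qed.

Lemma DCmap_circle (a1 a2 r t : R) : r <> 0 -> DCmap (a1, a2) (r * cos t, r * sin t) =
  pt4 (trig_comb r 0 t) (trig_comb 0 r t)
      (trig_comb (a1 * r + / r) (- (a2 * r)) t) (trig_comb (a2 * r) (a1 * r - / r) t).
Proof.
  intros Hr. rewrite DCmap_coords. unfold trig_comb.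
  replace ((r * cos t) ^ 2 + (r * sin t) ^ 2) with (r ^ 2)
    by (rewrite <- (Rmult_1_r (r ^ 2)), <- (cos2_sin2 t); ring).
  unfold pt4. f_equal; [f_equal; [f_equal|]|]; field; exact Hr.
Qed.

Lemma circle_image_any_angle (a : C) (r : R) (q : R4) :
  circle_image a r q <-> exists t, q = DCmap a (r * cos t, r * sin t).
Proof.
  split; [intros [t [_ ->]]; exists t; reflexivity|].
  intros [t ->].
  destruct (periodic_reduce _ (fun t => DCmap a (r * cos t, r * sin t)) (2 * PI))
    with (t := t) as [t' [Ht' E]]; [pose proof PI_RGT_0; lra| |].
  - intro s. rewrite cos_plus, sin_plus, cos_2PI, sin_2PI. f_equal; f_equal; ring.
  - exists t'. split; [lra|exact E].
Qed.

Section Planar_curve_on_DC.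

Variables (a1 a2 T : R) (x y : R -> R).
Variables (p1 p2 p3 p4 u1 u2 u3 u4 v1 v2 v3 v4 : R).

Let k (t : R) : R := / (x t ^ 2 + y t ^ 2).

Hypothesis HT : 0 < T.
Hypothesis Hx : continuity x.
Hypothesis Hy : continuity y.
Hypothesis Hper : forall t, x (t + T) = x t /\ y (t + T) = y t.
Hypothesis Hinj : forall s t, 0 <= s < T -> 0 <= t < T -> x s = x t -> y s = y t -> s = t.
Hypothesis Hnz : forall t, x t ^ 2 + y t ^ 2 <> 0.
Hypothesis Hplane : forall t, exists σ τ,
  x t = p1 + σ * u1 + τ * v1 /\ y t = p2 + σ * u2 + τ * v2 /\
  a1 * x t - a2 * y t + x t * k t = p3 + σ * u3 + τ * v3 /\
  a1 * y t + a2 * x t - y t * k t = p4 + σ * u4 + τ * v4.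

(* Determinant of the linear system in the plane coordinates (σ, τ) satisfied by
   the points of the curve at level k = κ. *)
Let level_det (κ : R) : R :=
  (a1 * u1 - a2 * u2 + κ * u1 - u3) * (a1 * v2 + a2 * v1 - κ * v2 - v4)
  - (a1 * u2 + a2 * u1 - κ * u2 - u4) * (a1 * v1 - a2 * v2 + κ * v1 - v3).

Lemma level_det_quadratic :
  exists B C, forall κ, level_det κ = - (u1 * v2 - u2 * v1) * κ ^ 2 + B * κ + C.
Proof.
  exists (u1 * (a1 * v2 + a2 * v1 - v4) - (a1 * u1 - a2 * u2 - u3) * v2
          - (a1 * u2 + a2 * u1 - u4) * v1 + u2 * (a1 * v1 - a2 * v2 - v3)), (level_det 0).
  intro κ. unfold level_det. ring.
Qed.

Lemma plane_projection_nondegenerate : u1 * v2 - u2 * v1 <> 0.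
Proof.
  intro Hdep.
  destruct (dependent_span_separating_functional u1 u2 v1 v2 Hdep) as [e1 [e2 He]].
  apply (periodic_not_injective (fun t => e1 * x t + e2 * y t) T); [continuity_auto|exact HT| |].
  - destruct (Hper 0) as [P1 P2]. rewrite Rplus_0_l in P1, P2. rewrite P1, P2; reflexivity.
  - intros s t Hs Ht E.
    destruct (Hplane s) as [σ [τ [Xs [Ys _]]]]. destruct (Hplane t) as [σ' [τ' [Xt [Yt _]]]].
    destruct (He (σ - σ') (τ - τ')) as [Dx Dy].
    + transitivity (e1 * x s + e2 * y s - (e1 * x t + e2 * y t)); [|lra].
      rewrite Xs, Ys, Xt, Yt. ring.
    + apply Hinj; auto; nra.
Qed.

Lemma equal_level_equal_point (s t : R) : k s = k t -> level_det (k s) <> 0 ->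
  x s = x t /\ y s = y t.
Proof.
  intros Ek Hdet.
  destruct (Hplane s) as [σ [τ [Xs [Ys [Zs Ws]]]]].
  destruct (Hplane t) as [σ' [τ' [Xt [Yt [Zt Wt]]]]].
  rewrite <- Ek in Zt, Wt.
  destruct (det2_kernel_trivial
              (a1 * u1 - a2 * u2 + k s * u1 - u3) (a1 * v1 - a2 * v2 + k s * v1 - v3)
              (a1 * u2 + a2 * u1 - k s * u2 - u4) (a1 * v2 + a2 * v1 - k s * v2 - v4)
              (σ - σ') (τ - τ')) as [Dσ Dτ].
  - unfold level_det in Hdet. intro E; apply Hdet; lra.
  - rewrite Xs, Ys in Zs. rewrite Xt, Yt in Zt. nra.
  - rewrite Xs, Ys in Ws. rewrite Xt, Yt in Wt. nra.
  - split; [rewrite Xs, Xt|rewrite Ys, Yt]; replace σ' with σ by lra; replace τ' with τ by lra;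
      reflexivity.
Qed.

Lemma level_constant (t : R) : k t = k 0.
Proof.
  assert (Hk : continuity k) by (apply continuity_inv; [continuity_auto|exact Hnz]).
  assert (Hkper : forall t, k (t + T) = k t).
  { intro s. unfold k. destruct (Hper s) as [-> ->]. reflexivity. }
  destruct (periodic_reduce _ k T HT Hkper t) as [t1 [Ht1 ->]].
  apply NNPP; intro Hne.
  assert (Ht1pos : 0 < t1) by (destruct (Req_dec t1 0) as [->|]; [easy|lra]).
  (* every level strictly between k 0 and k t1 is taken twice in one period,
     so the quadratic level_det vanishes on a whole interval *)
  assert (Hroot : forall κ, (k 0 < κ < k t1 \/ k t1 < κ < k 0) -> level_det κ = 0).
  { intros κ Hκ. apply NNPP; intro Hdet.
    destruct (periodic_value_twice k T t1 κ Hk) as [s1 [s2 [Hs1 [Hs2 [E1 E2]]]]];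
      [lra|rewrite <- (Rplus_0_l T); apply Hkper|exact Hκ|].
    destruct (equal_level_equal_point s1 s2) as [Ex Ey]; [congruence|congruence|].
    assert (s1 = s2) by (apply Hinj; auto; lra). lra. }
  destruct level_det_quadratic as [B [C Hquad]].
  set (d := k t1 - k 0). assert (Hd : d <> 0) by (unfold d; lra).
  assert (Hbetween : forall θ, 0 < θ < 1 ->
            k 0 < k 0 + θ * d < k t1 \/ k t1 < k 0 + θ * d < k 0).
  { intros θ Hθ. unfold d. destruct (Rlt_dec (k 0) (k t1)); [left|right]; nra. }
  assert (Hlead : - (u1 * v2 - u2 * v1) = 0).
  { apply (quadratic_three_roots _ B C (k 0 + 1/4 * d) (k 0 + 1/2 * d) (k 0 + 3/4 * d));
      try (intro; apply Hd; nra); rewrite <- Hquad; apply Hroot, Hbetween; lra. }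
  apply plane_projection_nondegenerate. lra.
Qed.

End Planar_curve_on_DC.

Lemma planar_DC_curve_sqnorm_constant (a1 a2 T : R) (x y : R -> R) (p u v : R4) :
  0 < T -> continuity x -> continuity y ->
  (forall t, x (t + T) = x t /\ y (t + T) = y t) ->
  (forall s t, 0 <= s < T -> 0 <= t < T -> x s = x t -> y s = y t -> s = t) ->
  (forall t, x t ^ 2 + y t ^ 2 <> 0) ->
  (forall t, exists σ τ, DCmap (a1, a2) (x t, y t) = aff p u v σ τ) ->
  forall t, x t ^ 2 + y t ^ 2 = x 0 ^ 2 + y 0 ^ 2.
Proof.
  destruct p as [[[p1 p2] p3] p4], u as [[[u1 u2] u3] u4], v as [[[v1 v2] v3] v4].
  intros HT Hx Hy Hper Hinj Hnz Hplane t.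
  rewrite <- (Rinv_inv (x t ^ 2 + y t ^ 2)), <- (Rinv_inv (x 0 ^ 2 + y 0 ^ 2)).
  f_equal. apply (level_constant a1 a2 T x y p1 p2 p3 p4 u1 u2 u3 u4 v1 v2 v3 v4); auto.
  intro s. destruct (Hplane s) as [σ [τ E]]. exists σ, τ.
  rewrite DCmap_coords in E. unfold aff, pt4 in E. injection E as E1 E2 E3 E4.
  repeat split; assumption.
Qed.

Lemma DC_curve_on_circle (a : C) (S : R4 -> Prop) (x y : R -> R) (T r : R) :
  0 < T -> 0 < r -> continuity x -> continuity y ->
  (forall t, x (t + T) = x t /\ y (t + T) = y t) ->
  (forall s t, 0 <= s < T -> 0 <= t < T -> x s = x t -> y s = y t -> s = t) ->
  (forall t, x t ^ 2 + y t ^ 2 = r ^ 2) ->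
  (forall q, S q <-> exists t, q = DCmap a (x t, y t)) ->
  forall q, S q <-> circle_image a r q.
Proof.
  intros HT Hr Hx Hy Hper Hinj Hcirc HS q. rewrite HS. split.
  - intros [t ->].
    destruct (polar_coordinates (x t) (y t) r Hr (Hcirc t)) as [θ [Hθ [Ex Ey]]].
    exists θ. split; [exact Hθ|]. rewrite Ex, Ey; reflexivity.
  - intros [θ [_ ->]].
    destruct (periodic_injective_circle_surjective x y T r HT Hr Hx Hy Hper Hinj Hcirc
                (cos θ) (sin θ) (cos2_sin2 θ)) as [t [Ex Ey]].
    exists t. rewrite Ex, Ey; reflexivity.
Qed.

Lemma planar_curve_on_DC_is_circle_image (a : C) (S : R4 -> Prop) :
  smooth_simple_closed_curve S -> (forall q, S q -> on_DC a q) -> in_affine_2plane S ->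
  exists r, 0 < r /\ forall q, S q <-> circle_image a r q.
Proof.
  destruct a as [a1 a2].
  intros [g1 [g2 [g3 [g4 [T [HT [Hs1 [Hs2 [_ [_ [Hper [_ [Hinj HS]]]]]]]]]]]]] HDC
         [p [u [v [_ Hplane]]]].
  assert (Hon : forall t, on_DC (a1, a2) (pt4 (g1 t) (g2 t) (g3 t) (g4 t))).
  { intro t. apply HDC, HS. exists t; reflexivity. }
  assert (Hpt : forall t, pt4 (g1 t) (g2 t) (g3 t) (g4 t) = DCmap (a1, a2) (g1 t, g2 t)).
  { intro t. destruct (on_DC_coords _ _ _ _ _ _ (Hon t)) as [_ [E3 E4]].
    rewrite DCmap_coords, E3, E4. reflexivity. }
  assert (Hnz : forall t, g1 t ^ 2 + g2 t ^ 2 <> 0) by (intro t; apply (on_DC_coords a1 a2 _ _ (g3 t) (g4 t)), Hon).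
  assert (Hper' : forall t, g1 (t + T) = g1 t /\ g2 (t + T) = g2 t)
    by (intro t; destruct (Hper t) as [E1 [E2 _]]; auto).
  assert (Hinj' : forall s t, 0 <= s < T -> 0 <= t < T -> g1 s = g1 t -> g2 s = g2 t -> s = t).
  { intros s t Hs Ht E1 E2. apply Hinj; auto. rewrite !Hpt, E1, E2. reflexivity. }
  pose proof (smooth_continuity g1 Hs1) as Hx. pose proof (smooth_continuity g2 Hs2) as Hy.
  assert (Hplane' : forall t, exists σ τ, DCmap (a1, a2) (g1 t, g2 t) = aff p u v σ τ).
  { intro t. rewrite <- Hpt. apply Hplane, HS. exists t; reflexivity. }
  assert (HS' : forall q, S q <-> exists t, q = DCmap (a1, a2) (g1 t, g2 t)).
  { intro q. rewrite HS. split; intros [t ->]; exists t; [|symmetry]; apply Hpt. }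
  pose proof (planar_DC_curve_sqnorm_constant a1 a2 T g1 g2 p u v
                HT Hx Hy Hper' Hinj' Hnz Hplane') as Hconst.
  set (m := g1 0 ^ 2 + g2 0 ^ 2) in Hconst.
  assert (Hm : 0 < m) by (specialize (Hnz 0); unfold m; nra).
  assert (Hr : 0 < sqrt m) by (apply sqrt_lt_R0, Hm).
  exists (sqrt m). split; [exact Hr|].
  apply (DC_curve_on_circle (a1, a2) S g1 g2 T); auto.
  intro t. rewrite Hconst, <- (sqrt_sqrt m) at 1 by lra. ring.
Qed.

Lemma circle_image_smooth_simple_closed_curve (a : C) (r : R) (S : R4 -> Prop) : 0 < r ->
  (forall q, S q <-> circle_image a r q) -> smooth_simple_closed_curve S.
Proof.
  destruct a as [a1 a2]. intros Hr HS. pose proof PI_RGT_0.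
  exists (trig_comb r 0), (trig_comb 0 r),
    (trig_comb (a1 * r + / r) (- (a2 * r))), (trig_comb (a2 * r) (a1 * r - / r)), (2 * PI).
  repeat split; try apply smooth_trig_comb; try apply trig_comb_periodic; try lra.
  - intro t. rewrite !(is_derive_unique _ _ _ (is_derive_trig_comb _ _ t)). unfold trig_comb.
    destruct (Req_dec (cos t) 0) as [Ec|Ec]; [left|right; left]; intro F.
    + assert (Es : sin t = 0) by (apply (Rmult_eq_reg_l (- r)); lra).
      pose proof (cos2_sin2 t) as Hcs. rewrite Ec, Es in Hcs. lra.
    + apply Ec, (Rmult_eq_reg_l r); lra.
  - intros s t Hs Ht E. unfold pt4, trig_comb in E. injection E as E1 E2 _ _.
    apply cos_sin_injective; auto; apply (Rmult_eq_reg_l r); lra.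
  - rewrite HS, circle_image_any_angle. intros [t ->]. exists t. apply DCmap_circle; lra.
  - intros [t ->]. apply HS, circle_image_any_angle. exists t. symmetry; apply DCmap_circle; lra.
Qed.

Lemma circle_image_on_DC (a : C) (r : R) (q : R4) : 0 < r -> circle_image a r q -> on_DC a q.
Proof.
  intros Hr [θ [_ ->]]. exists (r * cos θ, r * sin θ)%R. split; [|reflexivity].
  intro E. injection E as E1 E2. pose proof (cos2_sin2 θ).
  assert (cos θ = 0) by (apply (Rmult_eq_reg_l r); lra).
  assert (sin θ = 0) by (apply (Rmult_eq_reg_l r); lra). nra.
Qed.

Lemma circle_image_in_affine_2plane (a : C) (r : R) (S : R4 -> Prop) : 0 < r ->
  (forall q, S q -> circle_image a r q) -> in_affine_2plane S.
Proof.
  destruct a as [a1 a2]. intros Hr HS.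
  exists (pt4 0 0 0 0), (pt4 r 0 (a1 * r + / r) (a2 * r)), (pt4 0 r (- (a2 * r)) (a1 * r - / r)).
  split.
  - intros s t E. unfold aff, pt4 in E. injection E as E1 E2 _ _.
    split; apply (Rmult_eq_reg_l r); lra.
  - intros q Hq. destruct (HS q Hq) as [θ [_ ->]].
    exists (cos θ), (sin θ). rewrite DCmap_circle by lra. unfold aff, pt4, trig_comb.
    f_equal; [f_equal; [f_equal|]|]; ring.
Qed.

Theorem lemma2p1 (a : C) (S : R4 -> Prop) :
  (smooth_simple_closed_curve S /\ (forall q, S q -> on_DC a q) /\ in_affine_2plane S)
  <-> (exists r : R, 0 < r /\ forall q, S q <-> circle_image a r q).
Proof.
  split.
  - intros [Hcurve [HDC Hplane]]. exact (planar_curve_on_DC_is_circle_image a S Hcurve HDC Hplane).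
  - intros [r [Hr HS]]. split; [|split].
    + exact (circle_image_smooth_simple_closed_curve a r S Hr HS).
    + intros q Hq. apply (circle_image_on_DC a r); [exact Hr|apply HS, Hq].
    + apply (circle_image_in_affine_2plane a r); [exact Hr|intro q; apply HS].
Qed.
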